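(* Every partial $H$-module $(M,\pi)$ admits a proper and minimal dilation. More precisely, let $\operatorname{Hom}_k(H,M)$ be the left $H$-module with action $(h\triangleright f)(k)=f(kh)$. Define $\varphi:M\to\operatorname{Hom}_k(H,M)$ by $\varphi(m)(h)=\pi(h)(m)$, let $\overline M=H\triangleright\varphi(M)$ be the $H$-submodule generated by $\varphi(M)$, and define $T_\pi:\overline M\to\overline M$ by $T_\pi(f)=\varphi(f(1_H))$. Then $((\overline M,T_\pi),\varphi)$ is a proper and minimal dilation of $(M,\pi)$. It is called the standard dilation of $M$.
   Context: Throughout, $k$ is a field and $H$ is a Hopf algebra over $k$ with bijective antipode $S$, counit $\epsilon$, and Sweedler notation $\Delta(h)=h_{(1)}\otimes h_{(2)}$. Unadorned tensor products are over $k$. A partial representation of $H$ in a unital algebra $B$ is a linear map $\pi:H\to B$ satisfying, for all $h,k\in H$: - $\pi(1_H)=1_B$; - $\pi(h)\pi(k_{(1)})\pi(S(k_{(2)}))=\pi(hk_{(1)})\pi(S(k_{(2)}))$; - $\pi(h_{(1)})\pi(S(h_{(2)}))\pi(k)=\pi(h_{(1)})\pi(S(h_{(2)})k)$; - $\pi(h)\pi(S(k_{(1)}))\pi(k_{(2)})=\pi(hS(k_{(1)}))\pi(k_{(2)})$; - $\pi(S(h_{(1)}))\pi(h_{(2)})\pi(k)=\pi(S(h_{(1)}))\pi(h_{(2)}k)$. A partial $H$-module is a pair $(M,\pi)$ with $M$ a $k$-vector space and $\pi:H\to\mathrm{End}_k(M)$ a partial representation. A morphism of partial $H$-modules is a linear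 map $f$ with $f\circ\pi(h)=\pi'(h)\circ f$ for all $h\in H$. For a left $H$-module $M$ (action $\triangleright$) and a linear $T:M\to M$, put $T_h(m)=h_{(1)}\triangleright T(S(h_{(2)})\triangleright m)$. A projection $T$ (i.e. $T^2=T$) satisfies the c-condition if $T_h\circ T=T\circ T_h$ for all $h\in H$. If $T$ is such a projection, then $T(M)$ is a partial $H$-module via $\pi_T(h)(m)=T(h\triangleright m)$ for $m\in T(M)$. A dilation of a partial $H$-module $(M,\pi)$ is a pair $((N,T),\theta)$ where: - $N$ is a left $H$-module; - $T$ is a projection on $N$ satisfying the c-condition; - $\theta:M\to T(N)$ is an isomorphism of partial $H$-modules from $(M,\pi)$ to $(T(N),\pi_T)$. The dilation is proper if $N$ is generated as an $H$-module by $T(N)=\theta(M)$. It is minimal if $N$ contains no nonzero $H$-submodule $N'$ with $T(N')=0$. *)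

From HB Require Import structures.
From mathcomp Require Import all_boot all_order all_algebra.
From mathcomp Require Import boolp functions.
From Stdlib Require List.
Set Implicit Arguments. Unset Strict Implicit. Unset Printing Implicit Defensive.
Import GRing.Theory.
Local Open Scope ring_scope.

Definition klin (k : fieldType) (U V : lmodType k) (f : U -> V) : Prop :=
  forall (a : k) (x y : U), f (a *: x + y) = a *: f x + f y.

Definition kbilin (k : fieldType) (U V W : lmodType k) (B : U -> V -> W) : Prop :=
  (forall x, klin (B x)) /\ (forall y, klin (fun x => B x y)).

Definition ktrilin (k : fieldType) (U V W X : lmodType k) (B : U -> V -> W -> X)
  : Prop :=
  (forall x y, klin (B x y)) /\ (forall x z, klin (fun y => B x y z)) /\
  (forall y z, klin (fun x => B x y z)).

(** The comultiplication is given by a representative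
   [cop h = [:: (a_1,b_1); ...; (a_n,b_n)]] of
   [Delta h = sum_i a_i (x) b_i] (Sweedler notation:
   [sum_(p <- cop h) F p.1 p.2] is [F h_(1) h_(2)]).  Equalities in
   [H (x) H] (resp. [H (x) H (x) H]) are expressed by testing against every
   bilinear (resp. trilinear) map into every k-vector space, which is
   equivalent to equality in the tensor product (universal property). *)
Record hopf (k : fieldType) (H : algType k) := Hopf {
  cop : H -> seq (H * H);
  eps : H -> k;
  antip : H -> H;
  cop_lin : forall (V : lmodType k) (B : H -> H -> V), kbilin B ->
     klin (fun h => \sum_(p <- cop h) B p.1 p.2);
  cop_coassoc : forall (V : lmodType k) (B : H -> H -> H -> V), ktrilin B ->
     forall h, \sum_(p <- cop h) \sum_(q <- cop p.1) B q.1 q.2 p.2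
             = \sum_(p <- cop h) \sum_(q <- cop p.2) B p.1 q.1 q.2;
  cop_counitl : forall h, \sum_(p <- cop h) eps p.1 *: p.2 = h;
  cop_counitr : forall h, \sum_(p <- cop h) eps p.2 *: p.1 = h;
  cop_mul : forall (V : lmodType k) (B : H -> H -> V), kbilin B ->
     forall g h, \sum_(p <- cop (g * h)) B p.1 p.2
               = \sum_(p <- cop g) \sum_(q <- cop h) B (p.1 * q.1) (p.2 * q.2);
  cop_one : forall (V : lmodType k) (B : H -> H -> V), kbilin B ->
     \sum_(p <- cop 1) B p.1 p.2 = B 1 1;
  eps_lin : forall (a : k) (x y : H), eps (a *: x + y) = a * eps x + eps y;
  eps_mul : forall g h, eps (g * h) = eps g * eps h;
  eps_one : eps 1 = 1;
  antip_lin : klin antip;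
  antip_l : forall h, \sum_(p <- cop h) antip p.1 * p.2 = eps h *: 1;
  antip_r : forall h, \sum_(p <- cop h) p.1 * antip p.2 = eps h *: 1;
  antip_bij : bijective antip
}.

Section Partial.
Variables (k : fieldType) (H : algType k) (HH : hopf H).
Local Notation S := (antip HH).
Local Notation cop := (cop HH).

Definition partial_module (M : lmodType k) (pi : H -> M -> M) : Prop :=
  (forall h, klin (pi h)) /\
  (forall (a : k) (x y : H) (m : M), pi (a *: x + y) m = a *: pi x m + pi y m) /\
  (forall m, pi 1 m = m) /\
  [/\
      (forall h g m, \sum_(p <- cop g) pi h (pi p.1 (pi (S p.2) m))
                   = \sum_(p <- cop g) pi (h * p.1) (pi (S p.2) m)),
      (forall h g m, \sum_(p <- cop h) pi p.1 (pi (S p.2) (pi g m))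
                   = \sum_(p <- cop h) pi p.1 (pi (S p.2 * g) m)),
      (forall h g m, \sum_(p <- cop g) pi h (pi (S p.1) (pi p.2 m))
                   = \sum_(p <- cop g) pi (h * S p.1) (pi p.2 m)) &
      (forall h g m, \sum_(p <- cop h) pi (S p.1) (pi p.2 (pi g m))
                   = \sum_(p <- cop h) pi (S p.1) (pi (p.2 * g) m))].

Definition left_module (N : lmodType k) (act : H -> N -> N) : Prop :=
  [/\ (forall h, klin (act h)),
      (forall (a : k) (x y : H) (n : N), act (a *: x + y) n = a *: act x n + act y n),
      (forall n, act 1 n = n) &
      (forall g h n, act (g * h) n = act g (act h n))].

Definition Hspan (N : lmodType k) (act : H -> N -> N) (X : N -> Prop) (n : N)
  : Prop :=
  exists s : seq (k * H * N), (forall p, List.In p s -> X p.2) /\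
    n = \sum_(p <- s) p.1.1 *: act p.1.2 p.2.

Definition Hsubmodule (N : lmodType k) (act : H -> N -> N) (P : N -> Prop) : Prop :=
  [/\ P 0, (forall (a : k) x y, P x -> P y -> P (a *: x + y)) &
      (forall h x, P x -> P (act h x))].

Section Dil.
Variables (N : lmodType k) (act : H -> N -> N) (T : N -> N).

Definition imT (n : N) : Prop := exists n', n = T n'.

Definition Th (h : H) (n : N) : N :=
  \sum_(p <- cop h) act p.1 (T (act (S p.2) n)).

Definition c_projection : Prop :=
  [/\ klin T, (forall n, T (T n) = T n) &
      (forall h n, Th h (T n) = T (Th h n))].

Definition piT (h : H) (n : N) : N := T (act h n).

Definition dilation (M : lmodType k) (pi : H -> M -> M) (theta : M -> N) : Prop :=
  left_module act /\ c_projection /\ klin theta /\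
  [/\ (forall m, imT (theta m)),
      injective theta,
      (forall n, imT n -> exists m, theta m = n) &
      (forall h m, theta (pi h m) = piT h (theta m))].

Definition proper_dilation : Prop := forall n : N, Hspan act imT n.

Definition minimal_dilation : Prop :=
  forall P : N -> Prop, Hsubmodule act P -> (forall n, P n -> T n = 0) ->
    forall n, P n -> n = 0.

End Dil.
End Partial.

Section Standard.
Variables (k : fieldType) (H : algType k) (M : lmodType k) (pi : H -> M -> M).

(** Hom_k(H,M) sits inside the k-vector space H -> M (mathcomp-classical);
    the action (h |> f)(x) = f(x h). *)
Definition hact (h : H) (f : H -> M) : H -> M := fun x => f (x * h).

Definition phi (m : M) : H -> M := fun h => pi h m.

Definition Mbar_prop (f : H -> M) : Prop :=
  Hspan hact (fun g => exists m, g = phi m) f.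

Definition Mbar_pred : {pred (H -> M)} := fun f => `[< Mbar_prop f >].

Lemma hact_sum (h : H) (I : Type) (r : seq I) (F : I -> H -> M) :
  hact h (\sum_(i <- r) F i) = \sum_(i <- r) hact h (F i).
Proof.
apply/funext => x; rewrite /hact !fct_sumE /=.
by apply: eq_bigr => i _.
Qed.

Lemma Mbar_submod : subsemimod_closed Mbar_pred.
Proof.
split; last first.
  move=> a u /asboolP [su [Hu ->]]; apply/asboolP.
  exists [seq (a * p.1.1, p.1.2, p.2) | p <- su]; split.
    by move=> p /List.in_map_iff [q [<- Hq]]; apply: (Hu q Hq).
  by rewrite big_map scaler_sumr /=; apply: eq_bigr => p _; rewrite scalerA.
split.
  apply/asboolP; exists [::]; split => //; by rewrite big_nil.
move=> u v /asboolP [su [Hu ->]] /asboolP [sv [Hv ->]]; apply/asboolP.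
exists (su ++ sv); split; last by rewrite big_cat.
by move=> p Hp; case: (List.in_app_or _ _ _ Hp) => Hp'; [exact: (Hu p Hp')|exact: (Hv p Hp')].
Qed.

HB.instance Definition _ := GRing.isSubmodClosed.Build k (H -> M) Mbar_pred
  Mbar_submod.

Inductive Mbar : predArgType := MkMbar (f : H -> M) of f \in Mbar_pred.
Definition mbval (x : Mbar) := let: MkMbar f _ := x in f.
HB.instance Definition _ := [isSub of Mbar for mbval].
HB.instance Definition _ := [Choice of Mbar by <:].
HB.instance Definition _ := [SubChoice_isSubZmodule of Mbar by <:].
HB.instance Definition _ := [SubZmodule_isSubLmodule of Mbar by <:].

Lemma Mbar_hact h f : f \in Mbar_pred -> hact h f \in Mbar_pred.
Proof.
move=> /asboolP [s [Hs ->]]; apply/asboolP.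
exists [seq (p.1.1, h * p.1.2, p.2) | p <- s]; split.
  by move=> p /List.in_map_iff [q [<- Hq]]; apply: (Hs q Hq).
rewrite big_map hact_sum; apply: eq_bigr => p _ /=.
apply/funext => x; exact: (congr1 (fun y => p.1.1 *: p.2 y) (esym (mulrA x h p.1.2))).
Qed.

Lemma Mbar_phi m : phi m \in Mbar_pred.
Proof.
apply/asboolP; exists [:: (1, 1, phi m)]; split.
  by move=> p [<-|[]]; exists m.
by rewrite big_seq1 scale1r; apply/funext => x; rewrite /hact mulr1.
Qed.

Definition Mact (h : H) (x : Mbar) : Mbar := MkMbar (Mbar_hact h (valP x)).

Definition Tpi (x : Mbar) : Mbar := MkMbar (Mbar_phi (val x 1)).

Definition phiM (m : M) : Mbar := MkMbar (Mbar_phi m).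

End Standard.

From HB Require Import structures.
From mathcomp Require Import all_boot all_order all_algebra.
From mathcomp Require Import boolp functions.
Local Open Scope ring_scope.
Import GRing.Theory.
Set Implicit Arguments. Unset Strict Implicit.

(** Every element of [Mbar] is a finite linear combination of translates
    [h |> phi m : x |-> pi (x h) m], so any property stable under linear
    combinations can be checked on these generators.  This shows that the
    elements of [Mbar] are k-linear (so [Mbar] is an H-module) and, using the
    first two partial-representation axioms, that [T_pi] satisfies the
    c-condition.  Since [pi 1 = id], [T_pi] is a projection onto [phi(M)] and
    [phi] is injective.  The dilation is proper because every generator
    [phi m] equals [T_pi (phi m)], and minimal because
    [f x = (x |> f) 1 = T_pi (x |> f) 1] vanishes on any submodule killed by
    [T_pi]. *)

Section KLinear.
Variables (k : fieldType) (U V : lmodType k) (f : U -> V).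
Hypothesis f_klin : klin f.

Lemma klinD x y : f (x + y) = f x + f y.
Proof. by have := f_klin 1 x y; rewrite !scale1r. Qed.

Lemma klin0 : f 0 = 0.
Proof. by apply: (addrI (f 0)); rewrite -klinD !addr0. Qed.

Lemma klin_sum (I : Type) (r : seq I) (F : I -> U) :
  f (\sum_(i <- r) F i) = \sum_(i <- r) f (F i).
Proof.
elim: r => [|i r IH]; first by rewrite !big_nil klin0.
by rewrite !big_cons klinD IH.
Qed.

End KLinear.

Lemma eq_big_In (R I : Type) (idx : R) (op : R -> R -> R) (r : seq I)
    (F G : I -> R) :
  (forall i, List.In i r -> F i = G i) ->
  \big[op/idx]_(i <- r) F i = \big[op/idx]_(i <- r) G i.
Proof.
elim: r => [|i r IH] FG; first by rewrite !big_nil.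
rewrite !big_cons FG /=; last by left.
by rewrite IH // => j rj; apply: FG; right.
Qed.

Section StandardDilation.
Variables (k : fieldType) (H : algType k) (HH : hopf H)
  (M : lmodType k) (pi : H -> M -> M).
Hypothesis pi_partial : partial_module HH pi.

Local Notation S := (antip HH).
Local Notation act := (@Mact k H M pi).
Local Notation T := (@Tpi k H M pi).

Lemma pi_klin h : klin (pi h).
Proof. by case: pi_partial. Qed.

Lemma pi_klinl a x y m : pi (a *: x + y) m = a *: pi x m + pi y m.
Proof. by case: pi_partial => _ []. Qed.

Lemma pi1 m : pi 1 m = m.
Proof. by case: pi_partial => _ [_ []]. Qed.

Lemma phi1 m : phi pi m 1 = m.
Proof. exact: pi1. Qed.

Lemma Mbar_propP (x : Mbar pi) : Mbar_prop pi (val x).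
Proof. by case: x => f /= /asboolP. Qed.

Lemma val_Mact h (x : Mbar pi) y : val (act h x) y = val x (y * h).
Proof. by []. Qed.

Lemma val_Tpi (x : Mbar pi) y : val (T x) y = pi y (val x 1).
Proof. by []. Qed.

Lemma val_Mbar_sum (I : Type) (r : seq I) (F : I -> Mbar pi) :
  val (\sum_(i <- r) F i) = \sum_(i <- r) val (F i).
Proof. exact: raddf_sum. Qed.

Lemma Mbar_ind (Q : (H -> M) -> Prop) :
  Q 0 -> (forall c f g, Q f -> Q g -> Q (c *: f + g)) ->
  (forall h m, Q (hact h (phi pi m))) ->
  forall x : Mbar pi, Q (val x).
Proof.
move=> Q0 QD Qgen x; have [s [s_gen ->]] := Mbar_propP x.
elim: s s_gen => [|p s IH] s_gen; first by rewrite big_nil.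
rewrite big_cons; apply: QD; last by apply: IH => q sq; apply: s_gen; right.
by have [m ->] := s_gen p (or_introl erefl); apply: Qgen.
Qed.

Lemma Mbar_klin (x : Mbar pi) : klin (val x).
Proof.
pattern (val x); apply: Mbar_ind => /=.
- by move=> a u v; rewrite scaler0 addr0.
- move=> c f g f_lin g_lin a u v.
  by rewrite !fctE f_lin g_lin !scalerDr !scalerA mulrC addrACA.
- by move=> h m a u v; rewrite /hact /phi mulrDl -scalerAl pi_klinl.
Qed.

Lemma Mbar_c_condition (x : Mbar pi) h y :
  \sum_(p <- cop HH h) pi (y * p.1) (pi (S p.2) (val x 1))
  = pi y (\sum_(p <- cop HH h) pi p.1 (val x (S p.2))).
Proof.
have [PR1 PR2 _ _] := pi_partial.2.2.2.
have pi0 h' : pi h' 0 = 0 := klin0 (pi_klin h').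
pattern (val x); apply: Mbar_ind => /=.
- by rewrite big1 ?big1 ?pi0 // => p _; rewrite !pi0.
- move=> c f g f_c g_c.
  under eq_bigr do rewrite !fctE !(pi_klin _ c).
  under [in RHS]eq_bigr do rewrite !fctE (pi_klin _ c).
  by rewrite !big_split /= -!scaler_sumr (pi_klin _ c) f_c g_c.
- move=> g m; rewrite /hact /phi mul1r -PR2 klin_sum; last exact: pi_klin.
  by rewrite PR1.
Qed.

Lemma Mact_left_module : left_module act.
Proof.
split.
- by move=> h a x y; apply: val_inj; apply/funext.
- move=> a x y n; apply: val_inj; apply/funext => z.
  by rewrite /= /hact mulrDr -scalerAr Mbar_klin.
- by move=> n; apply: val_inj; apply/funext => z; rewrite /= /hact mulr1.
- by move=> g h n; apply: val_inj; apply/funext => z; rewrite /= /hact mulrA.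
Qed.

Lemma phiM_klin : klin (phiM pi).
Proof. by move=> a x y; apply: val_inj; apply/funext => z; apply: pi_klin. Qed.

Lemma Tpi_phiM m : T (phiM pi m) = phiM pi m.
Proof. by apply: val_inj; apply/funext => z; rewrite /= phi1. Qed.

Lemma Tpi_c_projection : c_projection HH act T.
Proof.
split.
- by move=> a x y; apply: phiM_klin.
- by move=> n; apply: Tpi_phiM.
- move=> h n; apply: val_inj; apply/funext => y.
  rewrite /Th val_Tpi !val_Mbar_sum !fct_sumE.
  under eq_bigr do rewrite !val_Mact !val_Tpi val_Mact mul1r.
  under [in RHS]eq_bigr do rewrite val_Mact val_Tpi val_Mact !mul1r.
  exact: Mbar_c_condition.
Qed.

Lemma standard_dilation : dilation HH act T pi (phiM pi).
Proof.
split; [exact: Mact_left_module | split; [exact: Tpi_c_projection | split]].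
  exact: phiM_klin.
split.
- by move=> m; exists (phiM pi m); rewrite Tpi_phiM.
- by move=> m1 m2 /(congr1 (fun x => val x 1)); rewrite /= !phi1.
- by move=> n [n' ->]; exists (val n' 1); apply: val_inj.
- by move=> h m; apply: val_inj; apply/funext => z; rewrite /= /hact mul1r.
Qed.

Lemma standard_dilation_proper : proper_dilation act T.
Proof.
move=> n; have [s [s_gen n_def]] := Mbar_propP n.
exists [seq (p.1.1, p.1.2, phiM pi (p.2 1)) | p <- s]; split.
  move=> _ /List.in_map_iff [p [<- _]].
  by exists (phiM pi (p.2 1)); rewrite Tpi_phiM.
apply: val_inj; rewrite n_def big_map val_Mbar_sum.
by apply: eq_big_In => p /s_gen [m ->]; rewrite phi1.
Qed.

Lemma standard_dilation_minimal : minimal_dilation act T.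
Proof.
move=> P [_ _ P_act] T_P n Pn; apply: val_inj; apply/funext => x.
have := congr1 (fun y => val y 1) (T_P _ (P_act x n Pn)).
by rewrite /= phi1 /hact mul1r.
Qed.

End StandardDilation.

Unset Implicit Arguments. Set Strict Implicit.

Theorem mainTheorem1 (k : fieldType) (H : algType k) (HH : hopf H)
    (M : lmodType k) (pi : H -> M -> M) :
  partial_module HH pi ->
  dilation HH (@Mact k H M pi) (@Tpi k H M pi) pi (@phiM k H M pi) /\
  proper_dilation (@Mact k H M pi) (@Tpi k H M pi) /\
  minimal_dilation (@Mact k H M pi) (@Tpi k H M pi).
Proof.
move=> pi_partial; split; first exact: standard_dilation pi_partial.
split; first exact: standard_dilation_proper pi_partial.
exact: standard_dilation_minimal pi_partial.
Qed.
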